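(* Let $(f,g),(f',g')\in\Theta$ both be in general position, with representation dimension $m$ and $k\ge m+1$ labels. Let $C=\sqrt{2m/(k-1)}$, and let $\sigma_{\min}$ and $\sigma_{\max}$ be respectively the smallest and the largest singular value among all matrices $\tilde L_{\mathcal J}$ of the model $(f,g)$ (over all pivots $\tilde y$ and all $m$-subsets $\mathcal J\subseteq\mathcal Y\setminus\{\tilde y\}$). Then $$C\,\frac{d_{\mathrm{logit}}(p_{f,g},p_{f',g'})}{\sigma_{\max}}\ \le\ d_{\mathrm{rep}}((f,g),(f',g'))\ \le\ C\,\frac{d_{\mathrm{logit}}(p_{f,g},p_{f',g'})}{\sigma_{\min}}.$$
   Context: Model class $\Theta$: pairs $(f,g)$, $f:\mathcal X\to\mathbb R^m$, $g:\mathcal Y\to\mathbb R^m$, $\mathcal Y$ a finite set of $k$ labels, $\sum_y g(y)=0$, inducing $p_{f,g}(y\mid x)\propto\exp(f(x)^\top g(y))$; $p_x$ is the data distribution. Logits $u(x)=(f(x)^\top g(y))_{y\in\mathcal Y}$, $d_{\mathrm{logit}}^2=\mathbb E_{x\sim p_x}\|u(x)-u'(x)\|_2^2$. For a pivot $\tilde y\in\mathcal Y$ set $\tilde g(y)=g(y)-g(\tilde y)$, and for $\mathcal J=\{y_1,\dots,y_m\}\subseteq\mathcal Y\setminus\{\tilde y\}$ let $\tilde L_{\mathcal J}=(\tilde g(y_1)\ \cdots\ \tilde g(y_m))\in\mathbb R^{m\times m}$ (similarly $\tilde L'_{\mathcal J}$ from $g'$). A model is in general position if $\tilde L_{\mathcal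 J}$ is invertible for every pivot $\tilde y$ and every $m$-subset $\mathcal J\subseteq\mathcal Y\setminus\{\tilde y\}$, and $\mathrm{span}\{f(x):x\in\mathrm{supp}(p_x)\}=\mathbb R^m$. Put $\tilde A_{\mathcal J}=\tilde L_{\mathcal J}^{-\top}\tilde L_{\mathcal J}'^{\top}$ and $J=\binom{k-1}{m}$. The linear identifiability dissimilarity is $$d_{\mathrm{rep}}^2((f,g),(f',g'))=\frac{1}{kJ}\sum_{\tilde y\in\mathcal Y}\ \sum_{\mathcal J\subseteq\mathcal Y\setminus\{\tilde y\},\,|\mathcal J|=m}\mathbb E_{x\sim p_x}\|f(x)-\tilde A_{\mathcal J}f'(x)\|_2^2.$$ *)

From HB Require Import structures.
From mathcomp Require Import all_boot all_order all_algebra.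
From mathcomp Require Import all_classical all_reals all_analysis.
Set Implicit Arguments. Unset Strict Implicit. Unset Printing Implicit Defensive.
Import Order.TTheory GRing.Theory Num.Theory.
Local Open Scope ring_scope.

Section Defs.
Context {R : realType} {m k : nat}.

Definition dotv (a b : 'cV[R]_m) : R := \sum_(i < m) a i 0 * b i 0.
Definition sqnorm {n : nat} (a : 'cV[R]_n) : R := \sum_(i < n) a i 0 ^+ 2.

Definition logits (fx : 'cV[R]_m) (g : 'I_k -> 'cV[R]_m) : 'cV[R]_k :=
  \col_(y < k) dotv fx (g y).

Definition gtilde (g : 'I_k -> 'cV[R]_m) (yt : 'I_k) (y : 'I_k) : 'cV[R]_m :=
  g y - g yt.

(* tilde L_J : columns tilde g(y_1), ..., tilde g(y_m), J = {y_1 < ... < y_m} *)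
Definition Ltilde (g : 'I_k -> 'cV[R]_m) (yt : 'I_k) (J : {set 'I_k}) : 'M[R]_m :=
  \matrix_(i < m, j < m) gtilde g yt (nth yt (enum J) j) i 0.

Definition admissible (yt : 'I_k) (J : {set 'I_k}) : bool :=
  (#|J| == m) && (yt \notin J).

Definition Atilde (g g' : 'I_k -> 'cV[R]_m) (yt : 'I_k) (J : {set 'I_k}) : 'M[R]_m :=
  invmx (Ltilde g yt J)^T *m (Ltilde g' yt J)^T.

Definition singular_value (M : 'M[R]_m) (s : R) : Prop :=
  0 <= s /\ eigenvalue (M^T *m M) (s ^+ 2).
End Defs.

Definition esqrt {R : realType} (x : \bar R) : \bar R :=
  match x with
  | EFin r => EFin (Num.sqrt r)
  | EPInf => +oo%E
  | ENInf => 0%E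
  end.

Local Open Scope ereal_scope.

Definition general_position {R : realType} {d : measure_display}
  {X : measurableType d} {m k : nat} (P : probability X R)
  (f : X -> 'cV[R]_m) (g : 'I_k -> 'cV[R]_m) : Prop :=
  (forall (yt : 'I_k) (J : {set 'I_k}), admissible (m:=m) yt J ->
     Ltilde g yt J \in unitmx) /\
  (* span{ f(x) : x in supp p_x } = R^m : no nonzero v is orthogonal to
     f(x) for p_x-almost every x *)
  (forall v : 'cV[R]_m, {ae P, forall x, dotv v (f x) = 0%R} -> v = 0%R).

Definition d_logit2 {R : realType} {d : measure_display}
  {X : measurableType d} {m k : nat} (P : probability X R)
  (f f' : X -> 'cV[R]_m) (g g' : 'I_k -> 'cV[R]_m) : \bar R :=
  \int[P]_x (sqnorm (logits (f x) g - logits (f' x) g'))%:E.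

Definition d_rep2 {R : realType} {d : measure_display}
  {X : measurableType d} {m k : nat} (P : probability X R)
  (f f' : X -> 'cV[R]_m) (g g' : 'I_k -> 'cV[R]_m) : \bar R :=
  (((k * 'C(k.-1, m))%:R)^-1)%:E *
  \sum_(yt : 'I_k) \sum_(J : {set 'I_k} | admissible (m:=m) yt J)
     \int[P]_x (sqnorm (f x - Atilde g g' yt J *m f' x))%:E.

Definition d_logit {R : realType} {d : measure_display}
  {X : measurableType d} {m k : nat} (P : probability X R)
  (f f' : X -> 'cV[R]_m) (g g' : 'I_k -> 'cV[R]_m) : \bar R :=
  esqrt (d_logit2 P f f' g g').

Definition d_rep {R : realType} {d : measure_display}
  {X : measurableType d} {m k : nat} (P : probability X R)
  (f f' : X -> 'cV[R]_m) (g g' : 'I_k -> 'cV[R]_m) : \bar R :=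
  esqrt (d_rep2 P f f' g g').

From HB Require Import structures.
From mathcomp Require Import all_boot all_order all_algebra.
From mathcomp Require Import all_classical all_reals all_analysis.
From mathcomp Require Import ring lra measurable_realfun.
Set Implicit Arguments. Unset Strict Implicit. Unset Printing Implicit Defensive.
Import Order.TTheory GRing.Theory Num.Theory.
Local Open Scope ring_scope.

(* Fix x and let w := u(x) - u'(x); since both unembeddings sum to zero, so does w.
   For a pivot yt and an admissible J = {y_1 < ... < y_m}, the vector
   Ltilde_J^T (f x - A_J f' x) = Ltilde_J^T f x - Ltilde'_J^T f' x has entries
   w(y_j) - w(yt).  Summing its squared norm over all pivots and all admissible J,
   every label y != yt is counted 'C(k-2, m-1) times, and sum w = 0 turns the total
   into 2 k 'C(k-2, m-1) |w|^2.  Each summand lies between sigma_min^2 and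
   sigma_max^2 times |f x - A_J f' x|^2, because the extreme values of the Rayleigh
   quotient of the symmetric matrix Ltilde_J Ltilde_J^T are eigenvalues of it, hence
   squared singular values of Ltilde_J.  Integrating in x, the normalisation
   1 / (k 'C(k-1, m)) of d_rep^2 turns 2 k 'C(k-2, m-1) into C^2 = 2m/(k-1). *)

Lemma quad_ge0_discr (R : realFieldType) (a b c : R) : 0 <= c ->
  (forall t, 0 <= a + t * (2 * b) + t ^+ 2 * c) -> b ^+ 2 <= a * c.
Proof.
move=> c0 h; pose p := Poly [:: a; 2 * b; c].
have := @deg_le2_poly_delta_ge0 R p (size_Poly _).
rewrite !coef_Poly /= subr_le0 => /(_ c0) discr_le.
suff : (2 * b) ^+ 2 <= 4 * c * a by nra.
by apply: discr_le => t; rewrite horner_Poly /= mul0r add0r; have := h t; lra.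
Qed.

Section QuadraticForm.
Variables (R : realType) (n : nat).
Implicit Types (S Q A : 'M[R]_n) (x y z : 'cV[R]_n).

Definition qform S x y : R := (x^T *m S *m y) 0 0.

Definition mx_l1norm Q : R := \sum_i \sum_j `|Q i j|.

Lemma qformE S x y : qform S x y = \sum_i \sum_j x i 0 * S i j * y j 0.
Proof.
rewrite /qform mxE; under eq_bigr do rewrite mxE big_distrl /=.
rewrite exchange_big /=; apply: eq_bigr => i _; apply: eq_bigr => j _.
by rewrite !mxE.
Qed.

Lemma sqnormE x : sqnorm x = (x^T *m x) 0 0.
Proof. by rewrite mxE; apply: eq_bigr => i _; rewrite !mxE expr2. Qed.

Lemma sqnorm_ge0 x : 0 <= sqnorm x.
Proof. by apply: sumr_ge0 => i _; rewrite sqr_ge0. Qed.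

Lemma sqr_coord_le_sqnorm x i : x i 0 ^+ 2 <= sqnorm x.
Proof. by rewrite /sqnorm (bigD1 i) //= lerDl sumr_ge0 // => j _; rewrite sqr_ge0. Qed.

Lemma sqnorm0 : sqnorm (0 : 'cV[R]_n) = 0.
Proof. by rewrite /sqnorm big1 // => i _; rewrite mxE expr0n. Qed.

Lemma sqnorm_gt0 x : (0 < sqnorm x) = (x != 0).
Proof.
rewrite lt_def sqnorm_ge0 andbT; congr negb; apply/eqP/eqP => [x0 | ->]; last exact: sqnorm0.
apply/matrixP => i j; rewrite (ord1 j) mxE; apply/eqP.
by rewrite -sqrf_eq0 eq_le sqr_ge0 -x0 sqr_coord_le_sqnorm.
Qed.

Lemma sqnorm_mulmx A y : sqnorm (A *m y) = qform (A^T *m A) y y.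
Proof. by rewrite sqnormE /qform trmx_mul !mulmxA. Qed.

Lemma qform0 S : qform S 0 0 = 0.
Proof. by rewrite /qform trmx0 !mul0mx mxE. Qed.

Lemma qform_subr_scalar S a x :
  qform (S - a%:M) x x = qform S x x - a * sqnorm x.
Proof. by rewrite /qform sqnormE mulmxBr mulmxBl mul_mx_scalar -scalemxAl !mxE. Qed.

Lemma qform_sym S x y : S^T = S -> qform S x y = qform S y x.
Proof.
move=> sS; transitivity ((x^T *m S *m y)^T 0 0); first by rewrite mxE.
by rewrite !trmx_mul trmxK sS mulmxA.
Qed.

Lemma qform_addr_scale S x y t : S^T = S ->
  qform S (x + t *: y) (x + t *: y) =
  qform S x x + t * (2 * qform S x y) + t ^+ 2 * qform S y y.
Proof.
move=> sS; have -> : 2 * qform S x y = qform S x y + qform S y x.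
  by rewrite (qform_sym y x sS); ring.
rewrite !qformE !mulrDr !big_distrr /= -!big_split /=; apply: eq_bigr => i _.
by rewrite !big_distrr -!big_split /=; apply: eq_bigr => j _; rewrite !mxE; ring.
Qed.

Lemma norm_qform_le Q y : `|qform Q y y| <= mx_l1norm Q * sqnorm y.
Proof.
rewrite qformE /mx_l1norm big_distrl /=; apply: (le_trans (ler_norm_sum _ _ _)).
apply: ler_sum => i _; rewrite big_distrl /=.
apply: (le_trans (ler_norm_sum _ _ _)); apply: ler_sum => j _.
rewrite -mulrA mulrCA normrM ler_wpM2l // normrM.
have sqr_le l : `|y l 0| ^+ 2 <= sqnorm y.
  by rewrite real_normK ?num_real ?sqr_coord_le_sqnorm.
have [h|/ltW h] := leP `|y i 0| `|y j 0|.
- by rewrite (le_trans (ler_wpM2r _ h)) // -expr2 sqr_le.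
- by rewrite (le_trans (ler_wpM2l _ h)) // -expr2 sqr_le.
Qed.

Lemma qform_CauchySchwarz S x y : S^T = S -> (forall z, 0 <= qform S z z) ->
  qform S x y ^+ 2 <= qform S x x * qform S y y.
Proof.
move=> sS psd; apply: quad_ge0_discr => // t.
by rewrite -qform_addr_scale.
Qed.

Lemma qform_mulmx_self S x : S^T = S -> qform S x (S *m x) = sqnorm (S *m x).
Proof. by move=> sS; rewrite sqnormE /qform trmx_mul sS !mulmxA. Qed.

Lemma mx_l1norm_ge0 Q : 0 <= mx_l1norm Q.
Proof. by apply: sumr_ge0 => i _; apply: sumr_ge0 => j _. Qed.

Lemma psd_unitmx_coercive S : S^T = S -> (forall z, 0 <= qform S z z) ->
  S \in unitmx -> exists2 e, 0 < e & forall x, e * sqnorm x <= qform S x x.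
Proof.
move=> sS psd uS; set N := mx_l1norm S; set N' := mx_l1norm ((invmx S)^T *m invmx S).
have N0 : 0 <= N := mx_l1norm_ge0 _; have N'0 : 0 <= N' := mx_l1norm_ge0 _.
exists (N' * N + 1)^-1 => [|x]; first by rewrite invr_gt0; nra.
set q := qform S x x; set u := sqnorm (S *m x).
have q0 : 0 <= q := psd x; have u0 : 0 <= u := sqnorm_ge0 _.
have u2_le : u ^+ 2 <= q * (N * u).
  rewrite /u -[in X in X ^+ 2]qform_mulmx_self //.
  rewrite (le_trans (qform_CauchySchwarz x (S *m x) sS psd)) // ler_wpM2l //.
  exact: le_trans (ler_norm _) (norm_qform_le _ _).
have u_le : u <= N * q.
  have [u_gt0|] := ltrP 0 u; last by move=> /le_trans->; rewrite ?mulr_ge0.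
  by rewrite -(ler_pM2r u_gt0) -expr2 (le_trans u2_le) // mulrCA mulrA.
have x_le : sqnorm x <= N' * u.
  rewrite -{1}(mulKmx uS x) sqnorm_mulmx.
  by rewrite (le_trans (ler_norm _)) ?norm_qform_le.
by rewrite mulrC ler_pdivrMr; nra.
Qed.
End QuadraticForm.

Lemma eigenvalue_unitmx (F : fieldType) n (A : 'M[F]_n) a :
  eigenvalue A a = (A - a%:M \notin unitmx).
Proof. by rewrite /eigenvalue /eigenspace kermx_eq0 row_free_unit. Qed.

Section SymmetricEigenvalue.
Variables (R : realType) (n : nat).
Hypothesis n_gt0 : (0 < n)%N.
Implicit Types (S L : 'M[R]_n) (x : 'cV[R]_n).

Lemma symmx_eigenvalue_min S : S^T = S ->
  exists2 mu, eigenvalue S mu & forall x, mu * sqnorm x <= qform S x x.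
Proof.
move=> sS; pose Q := [set qform S x x / sqnorm x | x in [set x : 'cV[R]_n | x != 0]]%classic.
have Q_lb : has_lbound Q.
  exists (- mx_l1norm S) => _ [x /= x0 <-].
  rewrite ler_pdivlMr ?sqnorm_gt0 // mulNr.
  by have := norm_qform_le S x; rewrite ler_norml => /andP[].
have Q_ne : nonempty Q.
  have x0 : const_mx 1 != 0 :> 'cV[R]_n.
    by apply/eqP => /matrixP/(_ (Ordinal n_gt0) 0); rewrite !mxE => /eqP; rewrite oner_eq0.
  by eexists; exists (const_mx 1).
(* If S - mu%:M were invertible it would be coercive, which would push the
   infimum mu of the Rayleigh quotient strictly above mu. *)
set mu := inf Q; have mu_le x : mu * sqnorm x <= qform S x x.
  have [->|x0] := eqVneq x 0; first by rewrite qform0 sqnorm0 mulr0.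
  by rewrite -ler_pdivlMr ?sqnorm_gt0 //; apply: ge_inf => //; exists x.
exists mu => //; rewrite eigenvalue_unitmx; apply/negP => uT.
have sT : (S - mu%:M)^T = S - mu%:M by rewrite linearB /= tr_scalar_mx sS.
have [e e_gt0 le_e] : exists2 e, 0 < e & forall x, e * sqnorm x <= qform (S - mu%:M) x x.
  by apply: psd_unitmx_coercive => // x; rewrite qform_subr_scalar subr_ge0.
suff : mu + e <= mu by lra.
apply: lb_le_inf => // _ [x x0 <-]; rewrite ler_pdivlMr ?sqnorm_gt0 //.
by have := le_e x; rewrite qform_subr_scalar; lra.
Qed.

Lemma symmx_eigenvalue_max S : S^T = S ->
  exists2 mu, eigenvalue S mu & forall x, qform S x x <= mu * sqnorm x.
Proof.
move=> sS; have sN : (- S)^T = - S by rewrite linearN /= sS.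
have qformN x : qform (- S) x x = - qform S x x by rewrite /qform mulmxN mulNmx mxE.
have [mu /eigenvalueP[v v_eig v0] le_mu] := symmx_eigenvalue_min sN.
exists (- mu) => [|x]; last by have := le_mu x; rewrite qformN; lra.
by apply/eigenvalueP; exists v; rewrite // scaleNr -v_eig mulmxN opprK.
Qed.

Lemma eigenvalue_mulmx_tr_ge0 L mu : eigenvalue (L *m L^T) mu -> 0 <= mu.
Proof.
case/eigenvalueP => v v_eig v0.
have : 0 <= mu * sqnorm v^T.
  have := sqnorm_ge0 (L^T *m v^T).
  by rewrite sqnorm_mulmx /qform !trmxK v_eig -scalemxAl mxE sqnormE trmxK.
by rewrite pmulr_lge0 // sqnorm_gt0 trmx_eq0.
Qed.

Lemma eigenvalue_mulmx_trC L mu : L \in unitmx ->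
  eigenvalue (L *m L^T) mu -> eigenvalue (L^T *m L) mu.
Proof.
move=> uL /eigenvalueP[v v_eig v0]; apply/eigenvalueP; exists (v *m L).
  by rewrite mulmxA -(mulmxA v) v_eig -scalemxAl.
by apply: contraNneq v0 => vL0; rewrite -(mulmxK uL v) vL0 mul0mx.
Qed.

Lemma singular_value_sqrt L mu : L \in unitmx ->
  eigenvalue (L *m L^T) mu -> singular_value L (Num.sqrt mu).
Proof.
move=> uL eig; split; first exact: sqrtr_ge0.
by rewrite sqr_sqrtr ?eigenvalue_mulmx_trC // (eigenvalue_mulmx_tr_ge0 eig).
Qed.

Lemma sqnorm_trmx_mul_ge L lo : L \in unitmx -> 0 <= lo ->
  (forall s, singular_value L s -> lo <= s) ->
  forall z, lo ^+ 2 * sqnorm z <= sqnorm (L^T *m z).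
Proof.
move=> uL lo0 lo_le z; have sS : (L *m L^T)^T = L *m L^T by rewrite trmx_mul trmxK.
have [mu eig le_mu] := symmx_eigenvalue_min sS.
have lo2_le : lo ^+ 2 <= mu.
  rewrite -(sqr_sqrtr (eigenvalue_mulmx_tr_ge0 eig)) ler_pXn2r ?nnegrE ?sqrtr_ge0 //.
  exact/lo_le/singular_value_sqrt.
by rewrite sqnorm_mulmx trmxK (le_trans _ (le_mu z)) // ler_wpM2r ?sqnorm_ge0.
Qed.

Lemma sqnorm_trmx_mul_le L hi : L \in unitmx ->
  (forall s, singular_value L s -> s <= hi) ->
  forall z, sqnorm (L^T *m z) <= hi ^+ 2 * sqnorm z.
Proof.
move=> uL le_hi z; have sS : (L *m L^T)^T = L *m L^T by rewrite trmx_mul trmxK.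
have [mu eig le_mu] := symmx_eigenvalue_max sS.
have mu_le : mu <= hi ^+ 2.
  have hi0 : 0 <= hi by apply: le_trans (le_hi _ (singular_value_sqrt uL eig)); exact: sqrtr_ge0.
  rewrite -(sqr_sqrtr (eigenvalue_mulmx_tr_ge0 eig)) ler_pXn2r ?nnegrE ?sqrtr_ge0 //.
  exact/le_hi/singular_value_sqrt.
by rewrite sqnorm_mulmx trmxK (le_trans (le_mu z)) // ler_wpM2r ?sqnorm_ge0.
Qed.
End SymmetricEigenvalue.

Definition pivot_count {R : ringType} (m k : nat) : R := 2 * k%:R * 'C(k.-2, m.-1)%:R.

Section PivotCombinatorics.
Variables (R : comRingType) (m k : nat).
Hypothesis m_gt0 : (0 < m)%N.

Lemma sum_nth_enum (yt : 'I_k) (J : {set 'I_k}) (F : 'I_k -> R) : #|J| = m ->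
  \sum_(j < m) F (nth yt (enum J) j) = \sum_(y in J) F y.
Proof.
move=> cJ; have sz : size (enum J) = m by rewrite -cJ cardE.
by rewrite -[RHS]big_enum (big_nth yt) /= sz big_mkord.
Qed.

Lemma card_admissible_mem (yt y : 'I_k) : y != yt ->
  #|[set J : {set 'I_k} | admissible (m:=m) yt J && (y \in J)]| = 'C(k.-2, m.-1).
Proof.
(* J |-> J :\ y is a bijection onto the (m-1)-subsets of Y \ {yt, y}. *)
move=> y_yt; set B := [set~ yt] :\ y.
have cB : #|B| = k.-2.
  by have := cardsD1 y [set~ yt]; rewrite cardsC1 card_ord !inE y_yt add1n => ->.
have yNB : y \notin B by rewrite !inE eqxx.
rewrite -cB -cards_draws -(card_in_imset (f := fun A => y |: A)); last first.
  move=> A1 A2; rewrite !inE => /andP[/fintype.subsetP sA1 _] /andP[/fintype.subsetP sA2 _] eqA.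
  by rewrite -(finset.setU1K (contra (sA1 y) yNB)) -(finset.setU1K (contra (sA2 y) yNB)) eqA.
congr #|pred_of_set _|; apply/setP => J; rewrite inE /admissible.
apply/idP/imsetP => [/andP[/andP[/eqP cJ ytNJ] yJ] | [A]].
  exists (J :\ y); last by rewrite finset.setD1K.
  rewrite inE; apply/andP; split; last by have := cardsD1 y J; rewrite yJ cJ add1n => ->.
  by apply/fintype.subsetP => z; rewrite !inE => /andP[-> zJ]; apply: contraNneq ytNJ => <-.
rewrite inE => /andP[/fintype.subsetP sAB /eqP cA] ->.
have yNA : y \notin A by apply: contra (sAB y) yNB.
rewrite cardsU1 yNA cA add1n prednK // eqxx setU11 andbT /= in_setU1 negb_or eq_sym y_yt.
by apply: contraTN isT => /sAB; rewrite !inE eqxx andbF.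
Qed.

Lemma sum_sqr_subr (v : 'I_k -> R) (yt : 'I_k) :
  \sum_y (v y - v yt) ^+ 2 =
  \sum_y v y ^+ 2 + (k%:R * v yt ^+ 2 - 2 * v yt * \sum_y v y).
Proof.
rewrite (eq_bigr (fun y => v y ^+ 2 + (v yt ^+ 2 - 2 * v yt * v y))) => [|y _]; last by ring.
by rewrite big_split /= sumrB sumr_const card_ord -mulr_sumr (mulr_natl (v yt ^+ 2)).
Qed.

Lemma sum_admissible_pivot_sqr (v : 'I_k -> R) : \sum_y v y = 0 ->
  \sum_(yt : 'I_k) \sum_(J : {set 'I_k} | admissible (m:=m) yt J)
     \sum_(j < m) (v (nth yt (enum J) j) - v yt) ^+ 2
  = pivot_count m k * \sum_y v y ^+ 2.
Proof.
move=> v0; have per_pivot (yt : 'I_k) :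
    \sum_(J : {set 'I_k} | admissible (m:=m) yt J)
      \sum_(j < m) (v (nth yt (enum J) j) - v yt) ^+ 2
    = 'C(k.-2, m.-1)%:R * \sum_y (v y - v yt) ^+ 2.
  under eq_bigr => J /andP[/eqP cJ _] do rewrite (sum_nth_enum yt (fun y => (v y - v yt) ^+ 2) cJ).
  rewrite (exchange_big_dep xpredT) //= big_distrr /=; apply: eq_bigr => y _.
  rewrite (eq_bigl [in [set J | admissible (m:=m) yt J && (y \in J)]]) => [|J]; last by rewrite inE.
  rewrite sumr_const; have [->|y_yt] := eqVneq y yt; first by rewrite subrr expr0n mulr0 mul0rn.
  by rewrite card_admissible_mem // mulr_natl.
under eq_bigr do rewrite per_pivot.
rewrite -big_distrr /=; under eq_bigr do rewrite sum_sqr_subr v0 mulr0 subr0.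
rewrite big_split /= sumr_const card_ord -big_distrr /= /pivot_count; ring.
Qed.
End PivotCombinatorics.

Section PivotedLogits.
Variables (R : realType) (m k : nat).
Implicit Types (g : 'I_k -> 'cV[R]_m) (a : 'cV[R]_m).

Lemma logits_mulmx a g : logits a g = (\matrix_(y, i) g y i 0) *m a.
Proof.
by apply/matrixP => y j; rewrite (ord1 j) !mxE; apply: eq_bigr => i _; rewrite !mxE mulrC.
Qed.

Lemma sum_logits a g : \sum_y g y = 0 -> \sum_y logits a g y 0 = 0.
Proof.
move=> g0; under eq_bigr do rewrite mxE.
rewrite /dotv exchange_big big1 //= => i _.
by rewrite -mulr_sumr -summxE g0 mxE mulr0.
Qed.

Lemma trmx_Ltilde_mulmx g yt J a j :
  ((Ltilde g yt J)^T *m a) j 0 = logits a g (nth yt (enum J) j) 0 - logits a g yt 0.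
Proof.
rewrite !mxE /dotv -sumrB; apply: eq_bigr => i _.
by rewrite !mxE mulrC mulrBr.
Qed.

Lemma trmx_Ltilde_Atilde g g' yt J a a' : Ltilde g yt J \in unitmx ->
  (Ltilde g yt J)^T *m (a - Atilde g g' yt J *m a') =
  (Ltilde g yt J)^T *m a - (Ltilde g' yt J)^T *m a'.
Proof. by move=> uL; rewrite mulmxBr !mulmxA mulmxV ?unitmx_tr ?mul1mx. Qed.
End PivotedLogits.

Section PivotSandwich.
Variables (R : realType) (m k : nat) (g g' : 'I_k -> 'cV[R]_m).
Hypothesis m_gt0 : (0 < m)%N.
Hypotheses (g0 : \sum_y g y = 0) (g'0 : \sum_y g' y = 0).
Hypothesis Ltilde_unit : forall yt J, admissible (m:=m) yt J -> Ltilde g yt J \in unitmx.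

Definition rep_gap (a a' : 'cV[R]_m) : R :=
  \sum_(yt : 'I_k) \sum_(J : {set 'I_k} | admissible (m:=m) yt J)
    sqnorm (a - Atilde g g' yt J *m a').

Lemma sum_sqnorm_trmx_Ltilde a a' :
  \sum_(yt : 'I_k) \sum_(J : {set 'I_k} | admissible (m:=m) yt J)
    sqnorm ((Ltilde g yt J)^T *m (a - Atilde g g' yt J *m a'))
  = pivot_count m k * sqnorm (logits a g - logits a' g').
Proof.
pose w y := logits a g y 0 - logits a' g' y 0.
have w0 : \sum_y w y = 0 by rewrite sumrB !sum_logits ?subrr.
have -> : sqnorm (logits a g - logits a' g') = \sum_y w y ^+ 2.
  by apply: eq_bigr => y _; rewrite /w !mxE.
rewrite -sum_admissible_pivot_sqr //.
apply: eq_bigr => yt _; apply: eq_bigr => J /Ltilde_unit uL.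
rewrite trmx_Ltilde_Atilde //; apply: eq_bigr => j _.
by rewrite /w mxE [X in _ + X]mxE !trmx_Ltilde_mulmx; congr (_ ^+ 2); ring.
Qed.

Lemma rep_gap_lbound s_min : 0 <= s_min ->
  (forall yt J s, admissible (m:=m) yt J -> singular_value (Ltilde g yt J) s -> s_min <= s) ->
  forall a a', s_min ^+ 2 * rep_gap a a' <= pivot_count m k * sqnorm (logits a g - logits a' g').
Proof.
move=> s_min0 min_le a a'; rewrite -sum_sqnorm_trmx_Ltilde mulr_sumr.
apply: ler_sum => yt _; rewrite mulr_sumr; apply: ler_sum => J adm.
exact: (sqnorm_trmx_mul_ge m_gt0 (Ltilde_unit adm) s_min0 (fun s => min_le yt J s adm)).
Qed.

Lemma rep_gap_ubound s_max :
  (forall yt J s, admissible (m:=m) yt J -> singular_value (Ltilde g yt J) s -> s <= s_max) ->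
  forall a a', pivot_count m k * sqnorm (logits a g - logits a' g') <= s_max ^+ 2 * rep_gap a a'.
Proof.
move=> le_max a a'; rewrite -sum_sqnorm_trmx_Ltilde mulr_sumr.
apply: ler_sum => yt _; rewrite mulr_sumr; apply: ler_sum => J adm.
exact: (sqnorm_trmx_mul_le m_gt0 (Ltilde_unit adm) (fun s => le_max yt J s adm)).
Qed.
End PivotSandwich.

Section ExtendedSqrt.
Variable R : realType.
Local Open Scope ereal_scope.

Lemma le_esqrt (x y : \bar R) : x <= y -> esqrt x <= esqrt y.
Proof.
case: x => [r| |]; case: y => [s| |] //=; rewrite ?lee_fin ?leey ?sqrtr_ge0 //.
exact: ler_wsqrtr.
Qed.

Lemma esqrtM_sqr (a : R) (y : \bar R) : (0 <= a)%R ->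
  esqrt ((a ^+ 2)%:E * y) = a%:E * esqrt y.
Proof.
rewrite le_eqVlt => /predU1P[<- | a_gt0]; first by rewrite expr0n /= !mul0e /= sqrtr0.
have a2_gt0 : (0 < a ^+ 2)%R by rewrite exprn_gt0.
case: y => [r| |] /=.
- by rewrite sqrtrM ?sqr_ge0 // sqrtr_sqr ger0_norm // ltW.
- by rewrite !gt0_muley ?lte_fin.
- by rewrite gt0_muleNy ?lte_fin //= mule0.
Qed.
End ExtendedSqrt.

Section MeasurableCoords.
Context d (X : measurableType d) (R : realType).

Lemma measurable_sum_pred (I : Type) (s : seq I) (p : pred I) (h : I -> X -> R) :
  (forall i, measurable_fun setT (h i)) ->
  measurable_fun setT (fun x => \sum_(i <- s | p i) h i x).
Proof.
move=> mh; under eq_fun do rewrite big_mkcond.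
by apply: measurable_sum => i; case: (p i) => //; exact: measurable_cst.
Qed.

Lemma measurable_sqnorm n (F : X -> 'cV[R]_n) :
  (forall i, measurable_fun setT (fun x => F x i 0)) ->
  measurable_fun setT (fun x => sqnorm (F x)).
Proof. by move=> mF; apply: measurable_sum_pred => i; exact: measurable_funX. Qed.

Lemma measurable_coordB n (F G : X -> 'cV[R]_n) i :
  measurable_fun setT (fun x => F x i 0) -> measurable_fun setT (fun x => G x i 0) ->
  measurable_fun setT (fun x => (F x - G x) i 0).
Proof.
by move=> mF mG; under eq_fun do rewrite !mxE; exact: measurable_funB.
Qed.

Lemma measurable_coord_mulmx n p (A : 'M[R]_(n, p)) (F : X -> 'cV[R]_p) i :
  (forall j, measurable_fun setT (fun x => F x j 0)) ->
  measurable_fun setT (fun x => (A *m F x) i 0).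
Proof.
move=> mF; under eq_fun do rewrite !mxE.
by apply: measurable_sum_pred => j; exact: measurable_funM (measurable_cst _) (mF j).
Qed.
End MeasurableCoords.

Section IntegralBounds.
Context d (X : measurableType d) (R : realType) (mu : {measure set X -> \bar R}).
Local Open Scope ereal_scope.

Lemma ge0_integral_sum_pred (I : Type) (s : seq I) (p : pred I) (h : I -> X -> R) :
  (forall i, measurable_fun setT (h i)) -> (forall i x, (0 <= h i x)%R) ->
  \int[mu]_x (\sum_(i <- s | p i) h i x)%:E = \sum_(i <- s | p i) \int[mu]_x (h i x)%:E.
Proof.
move=> mh h0; under eq_integral do rewrite -sumEFin big_mkcond.
rewrite ge0_integral_sum // => [|i|i x _]; last by case: (p i); rewrite ?lee_fin.
- by rewrite [RHS]big_mkcond; apply: eq_bigr => i _; case: (p i); rewrite ?integral0.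
- by case: (p i); [exact/measurable_EFinP | exact: measurable_cst].
Qed.

Lemma ge0_le_integral_scale (F G : X -> R) (t u : R) :
  measurable_fun setT F -> measurable_fun setT G ->
  (forall x, 0 <= F x)%R -> (forall x, 0 <= G x)%R -> (0 <= t)%R -> (0 <= u)%R ->
  (forall x, t * F x <= u * G x)%R ->
  t%:E * \int[mu]_x (F x)%:E <= u%:E * \int[mu]_x (G x)%:E.
Proof.
move=> mF mG F0 G0 t0 u0 le_FG.
have mFE : measurable_fun setT (EFin \o F) by exact/measurable_EFinP.
have mGE : measurable_fun setT (EFin \o G) by exact/measurable_EFinP.
rewrite -!ge0_integralZl_EFin // => [|x _|x _]; rewrite ?lee_fin //.
apply: ge0_le_integral => // [x _|||x _]; rewrite -?EFinM ?lee_fin ?mulr_ge0 //.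
- exact/measurable_EFinP/measurable_funM/mF/measurable_cst.
- exact/measurable_EFinP/measurable_funM/mG/measurable_cst.
Qed.
End IntegralBounds.

Lemma pivot_count_ratio (R : numFieldType) m k : (0 < m)%N -> (m < k)%N ->
  ((k * 'C(k.-1, m))%:R)^-1 * pivot_count m k = 2 * m%:R / (k%:R - 1) :> R.
Proof.
case: m => // m _; case: k => [|[|k]] // lt_mk; rewrite /pivot_count /=.
have C_neq0 : 'C(k.+1, m.+1)%:R != 0 :> R by rewrite pnatr_eq0 -lt0n bin_gt0.
have -> : 'C(k, m)%:R = m.+1%:R * 'C(k.+1, m.+1)%:R / k.+1%:R :> R.
  by rewrite -natrM -mul_bin_diag natrM [RHS]mulrC mulKf.
rewrite natrM -[k.+2%:R]natr1 addrK; field.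
by rewrite (addrC 1) !natr1 C_neq0 !pnatr_eq0.
Qed.

Lemma sqr_sqrt_ratio_div (R : realType) m k (s : R) : (0 < m)%N -> (m < k)%N ->
  (Num.sqrt (2 * m%:R / (k%:R - 1)) / s) ^+ 2 =
  ((k * 'C(k.-1, m))%:R)^-1 * (pivot_count m k / s ^+ 2).
Proof.
move=> m_gt0 lt_mk; rewrite expr_div_n sqr_sqrtr; last first.
  by rewrite divr_ge0 ?subr_ge0 ?ler1n ?mulr_ge0 //; apply: leq_trans lt_mk.
by rewrite -(pivot_count_ratio R m_gt0 lt_mk) [RHS]mulrA.
Qed.

Lemma singular_value_dim_gt0 (R : realType) n (L : 'M[R]_n) s :
  singular_value L s -> (0 < n)%N.
Proof.
by case: n L => // L [_ /eigenvalueP[v _]]; rewrite (thinmx0 v) eqxx.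
Qed.

Lemma singular_value_unitmx_gt0 (R : realType) n (L : 'M[R]_n) s :
  L \in unitmx -> singular_value L s -> 0 < s.
Proof.
move=> uL [s0 eig]; rewrite lt_def s0 andbT; apply: contraTneq eig => ->.
by rewrite eigenvalue_unitmx expr0n /= raddf0 subr0 negbK unitmx_mul unitmx_tr uL.
Qed.

Section RepresentationDistance.
Context (R : realType) (d : measure_display) (X : measurableType d).
Variables (P : probability X R) (m k : nat).
Variables (f f' : X -> 'cV[R]_m) (g g' : 'I_k -> 'cV[R]_m).
Hypothesis mf : forall i, measurable_fun setT (fun x => f x i 0).
Hypothesis mf' : forall i, measurable_fun setT (fun x => f' x i 0).

Lemma rep_gap_ge0 a a' : 0 <= rep_gap g g' a a'.
Proof. by apply: sumr_ge0 => yt _; apply: sumr_ge0 => J _; exact: sqnorm_ge0. Qed.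

Let measurable_pivot_gap yt J :
  measurable_fun setT (fun x => sqnorm (f x - Atilde g g' yt J *m f' x)).
Proof.
by apply: measurable_sqnorm => i; apply: measurable_coordB; last exact: measurable_coord_mulmx.
Qed.

Lemma measurable_rep_gap : measurable_fun setT (fun x => rep_gap g g' (f x) (f' x)).
Proof. by apply: measurable_sum_pred => yt; apply: measurable_sum_pred. Qed.

Lemma measurable_logit_gap :
  measurable_fun setT (fun x => sqnorm (logits (f x) g - logits (f' x) g')).
Proof.
apply: measurable_sqnorm => y; apply: measurable_coordB;
by under eq_fun do rewrite logits_mulmx; exact: measurable_coord_mulmx.
Qed.

Lemma d_rep2E : d_rep2 P f f' g g' =
  (((k * 'C(k.-1, m))%:R)^-1%:E * \int[P]_x (rep_gap g g' (f x) (f' x))%:E)%E.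
Proof.
rewrite /rep_gap ge0_integral_sum_pred => [||yt x]; last 2 first.
- by move=> yt; apply: measurable_sum_pred.
- by apply: sumr_ge0 => J _; exact: sqnorm_ge0.
congr (_ * _)%E; apply: eq_bigr => yt _.
by rewrite ge0_integral_sum_pred // => J x; exact: sqnorm_ge0.
Qed.
End RepresentationDistance.

Theorem mainTheorem5 (R : realType) (d : measure_display) (X : measurableType d)
  (P : probability X R) (m k : nat)
  (f f' : X -> 'cV[R]_m) (g g' : 'I_k -> 'cV[R]_m)
  (sigma_min sigma_max : R) :
  (m.+1 <= k)%N ->
  \sum_(y < k) g y = 0 -> \sum_(y < k) g' y = 0 ->
  (forall i : 'I_m, measurable_fun setT (fun x => f x i 0)) ->
  (forall i : 'I_m, measurable_fun setT (fun x => f' x i 0)) ->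
  general_position P f g -> general_position P f' g' ->
  (* sigma_min is the smallest singular value among all tilde L_J of (f,g) *)
  (exists yt J, admissible (m:=m) yt J /\ singular_value (Ltilde g yt J) sigma_min) ->
  (forall yt J s, admissible (m:=m) yt J -> singular_value (Ltilde g yt J) s ->
     sigma_min <= s) ->
  (* sigma_max is the largest singular value among all tilde L_J of (f,g) *)
  (exists yt J, admissible (m:=m) yt J /\ singular_value (Ltilde g yt J) sigma_max) ->
  (forall yt J s, admissible (m:=m) yt J -> singular_value (Ltilde g yt J) s ->
     s <= sigma_max) ->
  let C := Num.sqrt (2 * m%:R / (k%:R - 1)) in
  ((C / sigma_max)%:E * d_logit P f f' g g' <= d_rep P f f' g g')%E /\
  (d_rep P f f' g g' <= (C / sigma_min)%:E * d_logit P f f' g g')%E.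
Proof.
move=> lt_mk g0 g'0 mf mf' [L_unit _] _ [yt0 [J0 [adm0 sv_min]]] min_le _ le_max C.
have m_gt0 := singular_value_dim_gt0 sv_min.
have smin_gt0 := singular_value_unitmx_gt0 (L_unit _ _ adm0) sv_min.
have smax_gt0 := lt_le_trans smin_gt0 (le_max _ _ _ adm0 sv_min).
pose c : R := ((k * 'C(k.-1, m))%:R)^-1; pose K : R := pivot_count m k.
pose H x := rep_gap g g' (f x) (f' x).
pose V x := sqnorm (logits (f x) g - logits (f' x) g').
have mH : measurable_fun setT H := measurable_rep_gap g g' mf mf'.
have mV : measurable_fun setT V := measurable_logit_gap g g' mf mf'.
have H0 x : 0 <= H x := rep_gap_ge0 g g' (f x) (f' x).
have V0 x : 0 <= V x := sqnorm_ge0 _.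
have sq_ratio s : (C / s) ^+ 2 = c * (K / s ^+ 2) := sqr_sqrt_ratio_div s m_gt0 lt_mk.
have c0 : 0 <= c by rewrite invr_ge0.
have C_div_ge0 s : 0 < s -> 0 <= C / s by move=> s_gt0; rewrite divr_ge0 ?sqrtr_ge0 ?ltW.
rewrite /d_rep /d_logit -!esqrtM_sqr ?C_div_ge0 //.
split; apply: le_esqrt; rewrite (d_rep2E P g g' mf mf');
  apply: ge0_le_integral_scale => // [|x]; rewrite ?sqr_ge0 // sq_ratio;
  rewrite -mulrA ler_wpM2l // mulrAC.
- rewrite ler_pdivrMr ?exprn_gt0 // [leRHS]mulrC.
  exact: (rep_gap_ubound m_gt0 g0 g'0 L_unit le_max).
- rewrite ler_pdivlMr ?exprn_gt0 // mulrC.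
  exact: (rep_gap_lbound m_gt0 g0 g'0 L_unit (ltW smin_gt0) min_le).
Qed.
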